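(* Let $\mathcal{X}=\langle P,K,V\rangle$ be a polyhedral model. The logical equivalence relation $\equiv$ on $P$ is a simplicial bisimulation.
   Context: A $d$-simplex $\sigma\subseteq\mathbb{R}^m$ is the convex hull of $d+1$ affinely independent points $v_0,\dots,v_d$ (its vertices); the simplexes spanned by subsets of the vertices (including the empty simplex) are its faces, and $\tau\preceq\sigma$ means $\tau$ is a face of $\sigma$. The relative interior of $\sigma$ is $\tilde\sigma=\{\sum_i\lambda_iv_i:\lambda_i\in(0,1],\sum_i\lambda_i=1\}$. A simplicial complex $K$ is a finite set of simplexes of $\mathbb{R}^m$ closed under taking faces and such that the intersection of any two of its simplexes is a face of both. Its polyhedron is $|K|=\bigcup K$, with the subspace topology of $\mathbb{R}^m$; $\mathcal{C}$ and $\mathcal{I}$ denote closure and interior in this space. The cells of $K$ are the sets $\tilde\sigma$ for nonempty $\sigma\in K$; they form a partition $\tilde K$ of $|K|$. A path in a space $P$ is a continuous $\pi:[0,1]\to P$; $\pi(S)=\{\pi(s):s\in S\}$. Fix a finite set $AP$ of atomic propositions. A polyhedral model is $\mathcal{X}=\langle P,K,V\rangle$ with $K$ a simplicial complex, $P=|K|$, and $V:AP\to\mathcal{P}(P)$ such that each $V(p)$ is a union of cells of $K$ ($K$ is then called coherent with the model). SLCS formulas: $\phi::=\top\mid p\mid\neg\phi\mid\phi\wedge\phi\mid\Box\phi\mid\gamma(\phi,\phi)$, $p\in AP$. Semantics at $x\in P$, with $[\![\phi]\!]=\{x\in P:\mathcal{X},x\models\phi\}$: $\top$ always holds; $x\models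 p$ iff $x\in V(p)$; Boolean connectives as usual; $x\models\Box\phi$ iff $x\in\mathcal{I}([\![\phi]\!])$; $x\models\gamma(\phi,\psi)$ iff there is a path $\pi$ in $P$ with $\pi(0)=x$, $\pi((0,1))\subseteq[\![\phi]\!]$ and $\pi(1)\in[\![\psi]\!]$. Logical equivalence $\equiv$ on $P$: $x\equiv y$ iff $x$ and $y$ satisfy exactly the same SLCS formulas. A path $\pi$ is simplicial (w.r.t. $K$) if there are $s_0=0<s_1<\dots<s_k=1$ and cells $\tilde\sigma_1,\dots,\tilde\sigma_k$ of $K$ with $\pi((s_{i-1},s_i))\subseteq\tilde\sigma_i$ for all $i$. For $R\subseteq P\times P$, paths satisfy $\pi_1\hat R\pi_2$ iff $\pi_1(t)\,R\,\pi_2(t)$ for all $t\in[0,1]$. A relation $\sim\subseteq P\times P$ is a simplicial bisimulation if whenever $x\sim y$: (1) for all $p\in AP$, $x\in V(p)\iff y\in V(p)$; (2) for every simplicial path $\pi_x$ with $\pi_x(0)=x$ there is a simplicial path $\pi_y$ with $\pi_y(0)=y$ and $\pi_x\hat\sim\pi_y$; (3) for every simplicial path $\pi_y$ with $\pi_y(0)=y$ there is a simplicial path $\pi_x$ with $\pi_x(0)=x$ and $\pi_x\hat\sim\pi_y$. *)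

From HB Require Import structures.
From mathcomp Require Import all_boot all_order all_algebra.
From mathcomp Require Import finmap.
From mathcomp Require Import all_classical all_reals all_analysis.
Set Implicit Arguments. Unset Strict Implicit. Unset Printing Implicit Defensive.
Import Order.TTheory GRing.Theory Num.Theory.
Import numFieldNormedType.Exports.
Local Open Scope classical_set_scope.
Local Open Scope ring_scope.

Section Polyhedral.
Variables (R : realType) (m : nat).
Notation point := 'rV[R]_m.

(* A simplex is represented by its (finite) vertex set. *)
Definition aff_indep (A : {fset point}) : Prop :=
  forall lam : point -> R,
    \sum_(v <- A) lam v = 0 -> \sum_(v <- A) lam v *: v = 0 ->
    forall v, v \in A -> lam v = 0.

Definition conv (A : {fset point}) : set point :=
  [set x | exists lam : point -> R,
     [/\ (forall v, v \in A -> 0 <= lam v <= 1),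
         \sum_(v <- A) lam v = 1 & x = \sum_(v <- A) lam v *: v]].

Definition relint (A : {fset point}) : set point :=
  [set x | exists lam : point -> R,
     [/\ (forall v, v \in A -> 0 < lam v <= 1),
         \sum_(v <- A) lam v = 1 & x = \sum_(v <- A) lam v *: v]].

Definition simplicial_complex (K : {fset {fset point}}) : Prop :=
  [/\ (forall A, A \in K -> aff_indep A),
      (forall A B, A \in K -> (B `<=` A)%fset -> B \in K) &
      (forall A B, A \in K -> B \in K ->
         (exists2 C, (C `<=` A)%fset & conv C = conv A `&` conv B) /\
         (exists2 D, (D `<=` B)%fset & conv D = conv A `&` conv B))].

Definition polyhedron (K : {fset {fset point}}) : set point :=
  [set x | exists2 A, A \in K & conv A x].

(* cells of K: relative interiors of nonempty simplexes *)
Definition is_cell_of (K : {fset {fset point}}) (A : {fset point}) : Prop :=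
  A \in K /\ A != fset0.

Definition polyhedral_model (AP : finType) (K : {fset {fset point}})
    (V : AP -> set point) : Prop :=
  simplicial_complex K /\
  forall p : AP, exists S : set {fset point},
    S `<=` is_cell_of K /\ V p = \bigcup_(A in S) relint A.

Definition sub_interior (P S : set point) : set point :=
  [set x | P x /\ exists U : set point, [/\ open U, U x & U `&` P `<=` S]].

Definition unit_I : set R := [set t | 0 <= t <= 1].
Definition open_unit_I : set R := [set t | 0 < t < 1].

(* a path in P: continuous map [0,1] -> P (values outside [0,1] irrelevant) *)
Definition is_path (P : set point) (pi : R -> point) : Prop :=
  {within unit_I, continuous pi} /\ (forall t, unit_I t -> P (pi t)).

Inductive formula (AP : Type) : Type :=
  | FTop : formula AP
  | FAtom : AP -> formula AP
  | FNeg : formula AP -> formula AP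
  | FAnd : formula AP -> formula AP -> formula AP
  | FBox : formula AP -> formula AP
  | FGamma : formula AP -> formula AP -> formula AP.

Fixpoint sem (AP : Type) (K : {fset {fset point}}) (V : AP -> set point)
    (phi : formula AP) : set point :=
  let P := polyhedron K in
  match phi with
  | FTop => P
  | FAtom p => V p
  | FNeg f => P `\` sem K V f
  | FAnd f g => sem K V f `&` sem K V g
  | FBox f => sub_interior P (sem K V f)
  | FGamma f g => [set x | P x /\ exists pi : R -> point,
       [/\ is_path P pi, pi 0 = x, pi @` open_unit_I `<=` sem K V f
         & sem K V g (pi 1)]]
  end.

Definition log_equiv (AP : Type) (K : {fset {fset point}}) (V : AP -> set point)
    (x y : point) : Prop :=
  polyhedron K x /\ polyhedron K y /\
  forall phi : formula AP, sem K V phi x <-> sem K V phi y.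

Definition simplicial_path (K : {fset {fset point}}) (pi : R -> point) : Prop :=
  is_path (polyhedron K) pi /\
  exists (k : nat) (s : nat -> R) (sigma : nat -> {fset point}),
    [/\ s 0%N = 0, s k = 1,
        (forall i, (i < k)%N -> s i < s i.+1) &
        (forall i, (1 <= i <= k)%N ->
           is_cell_of K (sigma i) /\
           pi @` [set t | s i.-1 < t < s i] `<=` relint (sigma i))].

Definition path_rel (Rel : point -> point -> Prop) (p1 p2 : R -> point) : Prop :=
  forall t, unit_I t -> Rel (p1 t) (p2 t).

Definition simplicial_bisimulation (AP : Type) (K : {fset {fset point}})
    (V : AP -> set point) (Rel : point -> point -> Prop) : Prop :=
  (forall x y, Rel x y -> polyhedron K x /\ polyhedron K y) /\
  forall x y, Rel x y ->
    [/\ (forall p : AP, V p x <-> V p y),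
        (forall px, simplicial_path K px -> px 0 = x ->
           exists2 py, simplicial_path K py /\ py 0 = y & path_rel Rel px py) &
        (forall py, simplicial_path K py -> py 0 = y ->
           exists2 px, simplicial_path K px /\ px 0 = x & path_rel Rel px py)].

End Polyhedral.

From Pilot Require Import Defs.
From HB Require Import structures.
From mathcomp Require Import all_boot all_order all_algebra.
From mathcomp Require Import finmap.
From mathcomp Require Import all_classical all_reals all_analysis.
From mathcomp Require Import ring lra zify.
Set Implicit Arguments. Unset Strict Implicit. Unset Printing Implicit Defensive.
Import Order.TTheory GRing.Theory Num.Theory.
Import numFieldNormedType.Exports.
Import Pilot.Defs.
Local Open Scope classical_set_scope.
Local Open Scope ring_scope.

(* Every formula denotes a union of cells: for the interior and for gamma this
   rests on the fact that, near a point y, every cell of K contains the cell of y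
   in its closure. Hence points of a cell are equivalent, and since K has finitely
   many cells each equivalence class is defined by a characteristic formula chi.
   A simplicial path from x is lifted to y, equivalent to x, one open segment at a
   time: the start of a segment satisfies gamma(chi_c, chi_b) for c inside the
   segment and b its end, hence so does the lifted point, and by connectedness of
   (0, 1) the witnessing path can be replaced by a chain of straight segments,
   each inside a single cell. *)

Section Barycentric.
Variables (R : realType) (m : nat).
Local Notation point := 'rV[R]_m.
Implicit Types (A B C : {fset point}) (x y : point).

Lemma aff_indep_coord_uniq A (lam mu : point -> R) : aff_indep A ->
  \sum_(v <- A) lam v = \sum_(v <- A) mu v ->
  \sum_(v <- A) lam v *: v = \sum_(v <- A) mu v *: v ->
  {in A, lam =1 mu}.
Proof.
move=> hA h1 h2 v vA; apply/eqP; rewrite -subr_eq0; apply/eqP.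
apply: (hA (fun v => lam v - mu v)) => //.
  by rewrite sumrB h1 subrr.
by under eq_bigr do rewrite scalerBl; rewrite sumrB h2 subrr.
Qed.

Lemma big_fset_incl_if (V : nmodType) B A (F : point -> V) : (B `<=` A)%fset ->
  \sum_(v <- A) (if v \in B then F v else 0) = \sum_(v <- B) F v.
Proof.
move=> BA; rewrite -(big_fset_incl _ BA); last by move=> v _ /negbTE ->.
by rewrite big_seq_cond [RHS]big_seq_cond; apply: eq_bigr => v /andP[-> _].
Qed.

Lemma big_fset_incl_if_scale B A (lam : point -> R) : (B `<=` A)%fset ->
  \sum_(v <- A) (if v \in B then lam v else 0) *: v = \sum_(v <- B) lam v *: v.
Proof.
move=> BA; rewrite -(big_fset_incl_if _ BA); apply: eq_bigr => v _.
by case: ifP; rewrite ?scale0r.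
Qed.

Lemma relint_conv A : relint A `<=` conv A.
Proof.
move=> x [lam [h1 h2 h3]]; exists lam; split => // v vA.
by have /andP[/ltW -> ->] := h1 v vA.
Qed.

Lemma relint_neq0 A x : relint A x -> A != fset0.
Proof.
move=> [lam [_ h _]]; apply: contra_eq_neq h => ->.
by rewrite big_seq_fset0 eq_sym oner_neq0.
Qed.

Lemma conv_vertex A a : a \in A -> conv A a.
Proof.
move=> aA; exists (fun v => (v == a)%:R); split.
- by move=> v _; case: (v == a); rewrite /= ?lexx ?ler01.
- by rewrite (bigD1_seq a) //= eqxx big1 ?addr0 // => v /negbTE ->.
- rewrite (bigD1_seq a) //= eqxx scale1r big1 ?addr0 //.
  by move=> v /negbTE ->; rewrite scale0r.
Qed.

Lemma conv_fset1 a x : conv [fset a]%fset x -> x = a.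
Proof.
by move=> [lam [_]]; rewrite !big_seq_fset1 => -> ->; rewrite scale1r.
Qed.

Lemma conv_fsubset B A : (B `<=` A)%fset -> conv B `<=` conv A.
Proof.
move=> BA x [lam [h1 h2 h3]].
exists (fun v => if v \in B then lam v else 0); split.
- by move=> v _; case: ifP => vB; [exact: h1 | rewrite lexx ler01].
- by rewrite big_fset_incl_if.
- by rewrite big_fset_incl_if_scale.
Qed.

Lemma conv_relint_face A x : conv A x -> exists2 B, (B `<=` A)%fset & relint B x.
Proof.
move=> [lam [h1 h2 h3]].
pose B := [fset v in A | 0 < lam v]%fset.
have BA : (B `<=` A)%fset by apply/fsubsetP => v; rewrite !inE /= => /andP[].
have lam0 v : v \in A -> v \notin B -> lam v = 0.
  move=> vA; rewrite !inE /= vA /= -leNgt => lam_le0.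
  by apply/eqP; rewrite eq_le lam_le0; case/andP: (h1 v vA).
exists B => //; exists lam; split.
- move=> v; rewrite !inE /= => /andP[vA ->] /=.
  by case/andP: (h1 v vA).
- by rewrite -h2; apply: big_fset_incl => // v vA /(lam0 v vA).
- by rewrite h3; symmetry; apply: big_fset_incl => // v vA /(lam0 v vA) ->; rewrite scale0r.
Qed.

Lemma relint_conv_face_eq A C x : aff_indep A -> (C `<=` A)%fset ->
  relint A x -> conv C x -> C = A.
Proof.
move=> hA CA [lam [h1 h2 h3]] [mu [k1 k2 k3]].
have lam_mu := aff_indep_coord_uniq (lam := lam)
  (mu := fun v => if v \in C then mu v else 0) hA.
rewrite big_fset_incl_if // big_fset_incl_if_scale // in lam_mu.
have {}lam_mu := lam_mu (etrans h2 (esym k2)) (etrans (esym h3) k3).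
apply/eqP; rewrite eqEfsubset CA; apply/fsubsetP => v vA.
move: (lam_mu v vA); case: ifP => // _ lam0.
by have /andP[] := h1 v vA; rewrite lam0 ltxx.
Qed.

Definition lerp x y (l : R) : point := (1 - l) *: x + l *: y.

Lemma lerp0 x y : lerp x y 0 = x.
Proof. by rewrite /lerp subr0 scale1r scale0r addr0. Qed.

Lemma lerp1 x y : lerp x y 1 = y.
Proof. by rewrite /lerp subrr scale0r scale1r add0r. Qed.

Lemma lerpC x y l : lerp x y l = lerp y x (1 - l).
Proof.
by rewrite /lerp [RHS]addrC; congr (_ *: _ + _ *: _); rewrite opprB addrC subrK.
Qed.

Lemma lerpE x y l : lerp x y l = x + l *: (y - x).
Proof. by rewrite /lerp scalerBl scale1r scalerBr addrA addrAC. Qed.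

Lemma lerp_coord A x y l (mu nu : point -> R) :
  \sum_(v <- A) mu v = 1 -> x = \sum_(v <- A) mu v *: v ->
  \sum_(v <- A) nu v = 1 -> y = \sum_(v <- A) nu v *: v ->
  \sum_(v <- A) ((1 - l) * mu v + l * nu v) = 1 /\
  lerp x y l = \sum_(v <- A) ((1 - l) * mu v + l * nu v) *: v.
Proof.
move=> s1 e1 s2 e2; split.
  by rewrite big_split /= -!mulr_sumr s1 s2 !mulr1 subrK.
rewrite /lerp e1 e2 !scaler_sumr -big_split /=; apply: eq_bigr => v _.
by rewrite !scalerA -scalerDl.
Qed.

Lemma lerp_conv A x y l : conv A x -> conv A y -> 0 <= l <= 1 ->
  conv A (lerp x y l).
Proof.
move=> [mu [k1 k2 k3]] [nu [h1 h2 h3]] /andP[l0 l1].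
have [s e] := lerp_coord l k2 k3 h2 h3.
exists (fun v => (1 - l) * mu v + l * nu v); split => // v vA.
have /andP[a1 a2] := k1 v vA; have /andP[b1 b2] := h1 v vA.
apply/andP; split; nra.
Qed.

Lemma lerp_relint A x y l : conv A x -> relint A y -> 0 < l <= 1 ->
  relint A (lerp x y l).
Proof.
move=> [mu [k1 k2 k3]] [nu [h1 h2 h3]] /andP[l0 l1].
have [s e] := lerp_coord l k2 k3 h2 h3.
exists (fun v => (1 - l) * mu v + l * nu v); split => // v vA.
have /andP[a1 a2] := k1 v vA; have /andP[b1 b2] := h1 v vA.
apply/andP; split; nra.
Qed.

End Barycentric.

Section SimplicialComplex.
Variables (R : realType) (m : nat).
Local Notation point := 'rV[R]_m.
Implicit Types (A B : {fset point}) (x : point).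
Variable K : {fset {fset point}}.
Hypothesis hK : simplicial_complex K.

Lemma complex_indep A : A \in K -> aff_indep A.
Proof. by case: hK => h _ _; apply: h. Qed.

Lemma complex_face A B : A \in K -> (B `<=` A)%fset -> B \in K.
Proof. by case: hK => _ h _; apply: h. Qed.

Lemma relint_conv_sub A B x : A \in K -> B \in K -> relint A x -> conv B x ->
  conv A `<=` conv B.
Proof.
move=> AK BK xA xB; have [[C CA eC] _] := (let: And3 _ _ h := hK in h) A B AK BK.
have xC : conv C x by rewrite eC; split => //; apply: relint_conv.
rewrite -(relint_conv_face_eq (complex_indep AK) CA xA xC) eC.
by move=> y [].
Qed.

(* A vertex a of A lies in the relative interior of a face of B; comparing that
   face with the simplex [fset a] shows that it is [fset a] itself. *)
Lemma conv_sub_fsubset A B : A \in K -> B \in K -> conv A `<=` conv B ->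
  (A `<=` B)%fset.
Proof.
move=> AK BK AB; apply/fsubsetP => a aA.
have [C CB aC] := conv_relint_face (AB _ (conv_vertex aA)).
have aK : [fset a]%fset \in K by apply: complex_face AK _; rewrite fsub1set.
have Ca := relint_conv_sub (complex_face BK CB) aK aC (conv_vertex (fset11 a)).
have [c cC] := fset0Pn _ (relint_neq0 aC).
have ca : c = a := conv_fset1 (Ca _ (conv_vertex cC)).
by apply: (fsubsetP CB); rewrite -ca.
Qed.

Lemma relint_fsubset A B x : A \in K -> B \in K -> relint A x -> conv B x ->
  (A `<=` B)%fset.
Proof.
by move=> AK BK xA xB; apply: conv_sub_fsubset (relint_conv_sub AK BK xA xB).
Qed.

Lemma relint_inj A B x : A \in K -> B \in K -> relint A x -> relint B x -> A = B.
Proof.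
move=> AK BK xA xB; apply/eqP; rewrite eqEfsubset.
by rewrite (relint_fsubset AK BK xA (relint_conv xB))
  (relint_fsubset BK AK xB (relint_conv xA)).
Qed.

Lemma conv_polyhedron A : A \in K -> conv A `<=` polyhedron K.
Proof. by move=> AK x xA; exists A. Qed.

Lemma relint_polyhedron A : A \in K -> relint A `<=` polyhedron K.
Proof. by move=> AK x /relint_conv; apply: conv_polyhedron. Qed.

Lemma polyhedron_cell x : polyhedron K x -> exists2 A, A \in K & relint A x.
Proof.
move=> [B BK /conv_relint_face [A AB xA]].
by exists A => //; apply: complex_face AB.
Qed.

End SimplicialComplex.

Lemma open_exists_open (T : topologicalType) (Pr : set T -> Prop) :
  open [set t | exists Q, [/\ open Q, Q t & Pr Q]].
Proof.
rewrite [X in X _]openE => t [Q [oQ Qt PQ]].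
have : nbhs t Q by apply: open_nbhs_nbhs.
by apply: filterS => t' Qt'; exists Q.
Qed.

Lemma connected_locally_constant (T : topologicalType) (A : set T) (G : T -> Prop) :
  connected A ->
  (forall t, A t -> exists Q : set T,
     [/\ open Q, Q t & forall t', A t' -> Q t' -> (G t <-> G t')]) ->
  (exists2 t0, A t0 & G t0) -> forall t, A t -> G t.
Proof.
move=> cA loc [t0 At0 Gt0].
suff <- : [set t | A t /\ G t] = A by move=> t [].
apply: cA; first by exists t0.
- exists [set t | exists Q, [/\ open Q, Q t & forall t', A t' -> Q t' -> G t']].
    exact: open_exists_open.
  apply/seteqP; split => [t [At Gt]|t [At [Q [_ Qt QG]]]]; last by split => //; apply: QG.
  split => //; have [Q [oQ Qt QG]] := loc t At.
  by exists Q; split => // t' At' Qt'; apply/(QG t' At' Qt').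
- exists (~` [set t | exists Q, [/\ open Q, Q t & forall t', A t' -> Q t' -> ~ G t']]).
    by apply: open_closedC; apply: open_exists_open.
  apply/seteqP; split => [t [At Gt]|t [At nGt]].
    by split => // -[Q [_ Qt QG]]; apply: QG t At Qt Gt.
  split => //; apply: contrapT => nG; apply: nGt.
  have [Q [oQ Qt QG]] := loc t At.
  by exists Q; split => // t' At' Qt' Gt'; apply/nG/(QG t' At' Qt').
Qed.

Section Topology.
Variables (R : realType) (m : nat).
Local Notation point := 'rV[R]_m.
Implicit Types (A B : {fset point}) (x : point).

Definition std_simplex n : set 'rV[R]_n :=
  [set w | (forall i, 0 <= w ord0 i <= 1) /\ \sum_(i < n) w ord0 i = 1].
Arguments std_simplex : clear implicits.

Lemma conv_std_simplex A :
  conv A = (fun w => \sum_(i < size A) w ord0 i *: A`_i) @` std_simplex (size A).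
Proof.
apply/seteqP; split => x.
  move=> [lam [lam01 lam1 ->]]; exists (\row_i lam (A`_i)).
    split => [i|]; first by rewrite mxE; apply/lam01/mem_nth.
    by under eq_bigr do rewrite mxE; rewrite -lam1 (big_nth 0) big_mkord.
  by rewrite (big_nth 0) big_mkord; apply: eq_bigr => i _; rewrite mxE.
move=> [w [w01 w1] <-].
pose lam v := if insub (index v A) is Some i then w ord0 i else 0.
have lamE (i : 'I_(size A)) : lam A`_i = w ord0 i.
  rewrite /lam index_uniq ?fset_uniq // (insubT (fun k => k < size A)%N (ltn_ord i)) /=.
  by congr (w ord0 _); apply: val_inj.
exists lam; split.
- move=> v vA; have vi : (index v A < size A)%N by rewrite index_mem.
  by rewrite /lam (insubT (fun k => k < size A)%N vi); apply: w01.
- by rewrite (big_nth 0) big_mkord -w1; apply: eq_bigr => i _; rewrite lamE.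
- by rewrite (big_nth 0) big_mkord; apply: eq_bigr => i _; rewrite lamE.
Qed.

Lemma std_simplex_compact n : compact (std_simplex n).
Proof.
have coord_cont (i : 'I_n) : continuous (fun w : 'rV[R]_n => w ord0 i).
  exact: coord_continuous.
apply: compact_closedI.
  have := @rV_compact R n (fun _ => `[0, 1]%classic) (fun _ => @segment_compact R 0 1).
  by congr compact; apply/seteqP; split => w /= w01 i; have := w01 i; rewrite /= in_itv.
have sum_cont : continuous (fun w : 'rV[R]_n => \sum_(i < n) w ord0 i).
  by move=> w; apply: continuous_big => [|i _]; [exact: add_continuous | exact: coord_cont].
exact: (proj1 (continuous_closedP _) sum_cont _ (@closed_eq R 1)).
Qed.

Lemma conv_closed A : closed (conv A).
Proof.
rewrite conv_std_simplex; apply: compact_closed; first exact: norm_hausdorff.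
apply: continuous_compact; last exact: std_simplex_compact.
apply: continuous_subspaceT => w.
apply: continuous_big => [|i _]; first exact: add_continuous.
move=> v; apply: (@continuousZr_tmp _ _ _ (fun w : 'rV[R]_(size A) => w ord0 i)).
exact: coord_continuous.
Qed.

(* The complement of the simplexes not containing x. *)
Lemma star_nbhd (K : {fset {fset point}}) x : exists W : set point,
  [/\ open W, W x & forall B, B \in K -> forall y, W y -> conv B y -> conv B x].
Proof.
pose F B := if `[< conv B x >] then set0 else conv B.
exists (~` \bigcup_(B in [set B | B \in K]) F B); split.
- rewrite openC bigcup_fset; apply: closed_bigsetU => B _; rewrite /F.
  by case: ifP => _; [exact: closed0 | exact: conv_closed].
- by move=> [B _]; rewrite /F; case: ifPn => // /asboolPn.
- move=> B BK y Wy By; apply: contrapT => Bx; apply: Wy; exists B => //.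
  by rewrite /F asboolF.
Qed.

Definition itv (a b : R) : set R := [set t | a <= t <= b].

(* A neighbourhood form of [{within D, continuous f}] (see [cont_onP]) that is
   convenient for gluing and reparametrising paths. *)
Definition cont_on (D : set R) (f : R -> point) := forall t, D t ->
  forall W, open W -> W (f t) ->
  exists N : set R, [/\ open N, N t & forall t', D t' -> N t' -> W (f t')].

Lemma cont_onP (D : set R) (f : R -> point) :
  cont_on D f <-> {within D, continuous f}.
Proof.
split => [fc|/subspace_continuousP fc t Dt W oW Wt].
  apply/subspace_continuousP => t Dt W; rewrite nbhsE => -[U [oU Ut] UW].
  have [N [oN Nt NU]] := fc t Dt U oU Ut.
  rewrite /= nbhs_simpl /within /= nbhsE; exists N; first by split.
  by move=> t' Nt' Dt'; apply: UW; apply: NU.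
have := fc t Dt W (open_nbhs_nbhs (conj oW Wt)).
rewrite /= nbhs_simpl /within /= nbhsE => -[N [oN Nt] NW].
by exists N; split => // t' Dt' Nt'; apply: NW.
Qed.

Lemma continuous_cont_on (D : set R) (f : R -> point) :
  continuous f -> cont_on D f.
Proof.
move=> fc t Dt W oW Wt; exists (f @^-1` W); split => //.
exact: (proj1 (continuousP f)).
Qed.

Lemma cont_on_sub (D D' : set R) (f : R -> point) :
  D' `<=` D -> cont_on D f -> cont_on D' f.
Proof.
move=> D'D fc t D't W oW Wt; have [N [oN Nt NW]] := fc t (D'D _ D't) W oW Wt.
by exists N; split => // t' /D'D; apply: NW.
Qed.

Lemma cont_on_comp (D D' : set R) (f : R -> point) (h : R -> R) :
  continuous h -> (forall t, D' t -> D (h t)) -> cont_on D f ->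
  cont_on D' (fun t => f (h t)).
Proof.
move=> hc hD fc t Dt W oW Wt; have [N [oN Nt NW]] := fc (h t) (hD _ Dt) W oW Wt.
exists (h @^-1` N); split => //; first exact: (proj1 (continuousP h)).
by move=> t' Dt' Nt'; apply: NW => //; apply: hD.
Qed.

Lemma cont_on_glue (a b c : R) (f g : R -> point) : a <= b -> b <= c ->
  cont_on (itv a b) f -> cont_on (itv b c) g -> f b = g b ->
  cont_on (itv a c) (fun t => if t <= b then f t else g t).
Proof.
move=> ab bc fc gc fgb t /andP[ta tc] W oW.
have [tb|bt|->] := ltgtP t b => Wt.
- have [N [oN Nt NW]] := fc t (introT andP (conj ta (ltW tb))) W oW Wt.
  exists (N `&` [set s | s < b]); split => //; first by apply: openI => //; apply: open_lt.
  move=> s /andP[sa _] [Ns sb]; rewrite /= (ltW sb); apply: NW => //.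
  by rewrite /itv /= sa (ltW sb).
- have [N [oN Nt NW]] := gc t (introT andP (conj (ltW bt) tc)) W oW Wt.
  exists (N `&` [set s | b < s]); split => //; first by apply: openI => //; apply: open_gt.
  move=> s /andP[_ sc] [Ns bs]; rewrite /= leNgt bs /=; apply: NW => //.
  by rewrite /itv /= sc (ltW bs).
- have [N1 [oN1 Nb1 NW1]] := fc b (introT andP (conj ab (lexx b))) W oW Wt.
  rewrite fgb in Wt.
  have [N2 [oN2 Nb2 NW2]] := gc b (introT andP (conj (lexx b) bc)) W oW Wt.
  exists (N1 `&` N2); split => //; first exact: openI.
  move=> s /andP[sa sc] [N1s N2s] /=; case: ifPn => sb.
    by apply: NW1 => //; rewrite /itv /= sa sb.
  by apply: NW2 => //; rewrite /itv /= sc ltW // ltNge.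
Qed.

Lemma open_nbhs_small (Q : set R) t c : open Q -> Q t -> 0 < c ->
  exists e, [/\ 0 < e, e <= c, Q (t + e) & Q (t - e)].
Proof.
move=> oQ Qt c0; have /nbhs_ballP [e e0 eQ] : nbhs t Q by exact: open_nbhs_nbhs.
pose d := Num.min (e / 2) c.
have d0 : 0 < d by rewrite lt_min c0 divr_gt0.
have de : d < e by rewrite gt_min ltr_pdivrMr // ltr_pMr // ltr1n.
exists d; split => //; first by rewrite ge_min lexx orbT.
  by apply: eQ; rewrite /ball /= (_ : t - (t + d) = - d) ?normrN ?gtr0_norm //; ring.
by apply: eQ; rewrite /ball /= (_ : t - (t - d) = d) ?gtr0_norm //; ring.
Qed.

Lemma affine_continuous (u k : R) : continuous (fun t : R => u + t * k).
Proof.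
move=> t; apply: cvgD; first exact: cvg_cst.
by apply: cvgM; [exact: cvg_id | exact: cvg_cst].
Qed.

Lemma lerp_continuous x y (h : R -> R) : continuous h ->
  continuous (fun t => lerp x y (h t)).
Proof.
move=> hc; under eq_fun do rewrite lerpE.
move=> t; apply: cvgD; first exact: cvg_cst.
by apply: cvgZ; [exact: hc | exact: cvg_cst].
Qed.

Lemma open_lerp_small (W : set point) x y : open W -> W x ->
  exists e, [/\ 0 < e, e <= 1 & W (lerp x y e)].
Proof.
move=> oW Wx; have oQ : open ((fun l => lerp x y l) @^-1` W).
  by apply: (proj1 (continuousP _)) oW; apply: lerp_continuous => t; apply: cvg_id.
have Q0 : ((fun l => lerp x y l) @^-1` W) 0 by rewrite /= lerp0.
have [e [e0 e1 We _]] := open_nbhs_small oQ Q0 ltr01.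
by exists e; rewrite /= add0r in We.
Qed.

End Topology.

Section Paths.
Variables (R : realType) (m : nat).
Local Notation point := 'rV[R]_m.
Local Notation unit_I := (@unit_I R).
Local Notation open_unit_I := (@open_unit_I R).

Definition path_concat (f g : R -> point) t :=
  if t <= 1/2 then f (t * 2) else g (t * 2 - 1).

Lemma path_concat0 f g : path_concat f g 0 = f 0.
Proof. by rewrite /path_concat ifT ?mul0r // divr_ge0 ?ler01. Qed.

Lemma path_concat1 f g : path_concat f g 1 = g 1.
Proof.
rewrite /path_concat ifF ?mul1r; first by congr g; lra.
by apply/negbTE; rewrite -ltNge; lra.
Qed.

Lemma is_path_concat (P : set point) f g : is_path P f -> is_path P g ->
  f 1 = g 0 -> is_path P (path_concat f g).
Proof.
move=> [/cont_onP fc fP] [/cont_onP gc gP] fg; split.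
  apply/cont_onP/cont_on_glue; [lra | lra | | |].
  - apply: (cont_on_comp (f := f) (h := fun t => t * 2)) fc.
      by move=> t; apply: cvgM; [exact: cvg_id | exact: cvg_cst].
    by move=> t /andP[t0 t1]; rewrite /unit_I /=; apply/andP; split; lra.
  - apply: (cont_on_comp (f := g) (h := fun t => t * 2 - 1)) gc.
      move=> t; apply: cvgB; last exact: cvg_cst.
      by apply: cvgM; [exact: cvg_id | exact: cvg_cst].
    by move=> t /andP[t0 t1]; rewrite /unit_I /=; apply/andP; split; lra.
  - by rewrite /= (_ : 1 / 2 * 2 = 1 :> R) ?fg ?subrr //; field.
move=> t /andP[t0 t1]; rewrite /path_concat; case: ifPn => th.
  by apply: fP; rewrite /unit_I /=; apply/andP; split; lra.
by apply: gP; rewrite -ltNge in th; rewrite /unit_I /=; apply/andP; split; lra.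
Qed.

Lemma path_concat_open_unit_I (U : set point) (f g : R -> point) :
  f @` open_unit_I `<=` U -> U (f 1) -> g @` open_unit_I `<=` U ->
  path_concat f g @` open_unit_I `<=` U.
Proof.
move=> fU f1 gU _ [t /andP[t0 t1] <-]; rewrite /path_concat.
have [th|th|->] := ltgtP t (1/2).
- by apply: fU; exists (t * 2) => //; apply/andP; split; lra.
- by apply: gU; exists (t * 2 - 1) => //; apply/andP; split; lra.
- by rewrite (_ : 1 / 2 * 2 = 1 :> R) //; field.
Qed.

End Paths.

Section CellUnions.
Variables (R : realType) (m : nat).
Local Notation point := 'rV[R]_m.
Local Notation unit_I := (@unit_I R).
Local Notation open_unit_I := (@open_unit_I R).
Implicit Types (A B : {fset point}) (x y : point) (U W : set point).
Variable K : {fset {fset point}}.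
Hypothesis hK : simplicial_complex K.
Local Notation P := (polyhedron K).

Definition cell_union U := U `<=` P /\
  forall A x y, A \in K -> relint A x -> relint A y -> U x -> U y.

(* [reach [[phi]] [[psi]]] is [[gamma(phi, psi)]]. *)
Definition reach U W : set point := [set x | P x /\ exists pi : R -> point,
  [/\ is_path P pi, pi 0 = x, pi @` open_unit_I `<=` U & W (pi 1)]].

Lemma cell_union_relint U A x : cell_union U -> A \in K -> relint A x -> U x ->
  relint A `<=` U.
Proof. by move=> [_ hU] AK xA Ux y yA; apply: hU xA yA Ux. Qed.

Lemma cell_union_polyhedron : cell_union P.
Proof. by split => // A x y AK _ yA _; apply: relint_polyhedron yA. Qed.

Lemma cell_union_setD U : cell_union U -> cell_union (P `\` U).
Proof.
move=> [_ hU]; split => [x []//|A x y AK xA yA [_ nUx]].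
by split; [apply: relint_polyhedron yA | move=> Uy; apply/nUx/(hU A y x)].
Qed.

Lemma cell_union_setI U W : cell_union U -> cell_union W -> cell_union (U `&` W).
Proof.
move=> [UP hU] [_ hW]; split => [x [/UP]//|A x y AK xA yA [Ux Wx]].
by split; [apply: hU xA yA Ux | apply: hW xA yA Wx].
Qed.

Lemma star_cell y : exists N : set point, [/\ open N, N y &
  forall A x p, A \in K -> relint A y -> relint A x -> N p -> P p ->
    exists2 r, r \in K & relint r p /\ conv r x].
Proof.
have [N [oN Ny NB]] := star_nbhd K y; exists N; split => // A x p AK yA xA Np Pp.
have [r rK pr] := polyhedron_cell hK Pp; exists r => //; split => //.
have Ar := relint_fsubset hK AK rK yA (NB r rK p Np (relint_conv pr)).
exact: conv_fsubset Ar _ (relint_conv xA).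
Qed.

(* Points p near y lie in cells whose closure contains x; the segment from x
   towards p enters a neighbourhood of x inside the cell of p. *)
Lemma cell_union_interior U : cell_union U -> cell_union (sub_interior P U).
Proof.
move=> hU; split => [x []//|A x y AK xA yA [_ [W [oW Wx WU]]]].
split; first exact: relint_polyhedron yA.
have [N [oN Ny NA]] := star_cell y; exists N; split => // p [Np Pp].
have [r rK [pr xr]] := NA A x p AK yA xA Np Pp.
have [e [e0 e1 We]] := open_lerp_small p oW Wx.
have er : relint r (lerp x p e) by apply: lerp_relint xr pr _; rewrite e0 e1.
apply: (cell_union_relint hU rK er) pr.
by apply: WU; split => //; apply: relint_polyhedron er.
Qed.

Lemma reach_cont_on U W f a b : a < b -> cont_on (itv a b) f ->
  (forall t, itv a b t -> P (f t)) -> (forall t, a < t < b -> U (f t)) ->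
  W (f b) -> reach U W (f a).
Proof.
move=> ab fc fP fU fb; pose h t := a + t * (b - a).
have hI t : unit_I t -> itv a b (h t).
  by move=> /andP[t0 t1]; rewrite /itv /h /=; apply/andP; split; nra.
split; first by apply: fP; rewrite /itv /= lexx ltW.
exists (fun t => f (h t)); split.
- split; last by move=> t /hI /fP.
  by apply/cont_onP; apply: cont_on_comp fc => //; apply: affine_continuous.
- by rewrite /h mul0r addr0.
- by move=> _ [t /andP[t0 t1] <-]; apply: fU; rewrite /h; apply/andP; split; nra.
- by rewrite /h mul1r addrC subrK.
Qed.

Lemma reach_shift U W pi s : is_path P pi -> pi @` open_unit_I `<=` U ->
  W (pi 1) -> 0 < s < 1 -> reach U W (pi s).
Proof.
move=> [/cont_onP pic piP] piU pi1 /andP[s0 s1].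
have sI : itv s 1 `<=` unit_I.
  by move=> t /andP[st t1]; rewrite /unit_I /= t1 andbT; lra.
apply: reach_cont_on s1 (cont_on_sub sI pic) (fun t tI => piP t (sI t tI)) _ pi1.
by move=> t /andP[st t1]; apply: piU; exists t => //; apply/andP; split; lra.
Qed.

Lemma reach_lerp U W r y q : r \in K -> conv r y -> relint r `<=` U ->
  relint r q -> reach U W q -> reach U W y.
Proof.
move=> rK yr rU qr [_ [pi [pip pi0 piU pi1]]].
split; first exact: conv_polyhedron yr.
exists (path_concat (lerp y q) pi); split.
- apply: is_path_concat => //; last by rewrite lerp1.
  split; first by apply/cont_onP/continuous_cont_on/lerp_continuous => t; apply: cvg_id.
  by move=> t tI; apply: (conv_polyhedron rK); apply: lerp_conv yr (relint_conv qr) tI.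
- by rewrite path_concat0 lerp0.
- apply: path_concat_open_unit_I => //; last by rewrite lerp1; apply: rU.
  move=> _ [t /andP[t0 t1] <-]; apply: rU; apply: lerp_relint yr qr _.
  by rewrite t0 ltW.
- by rewrite path_concat1.
Qed.

(* Follow the segment from y into the cell of a point of the path close to x,
   then the rest of the path. *)
Lemma cell_union_reach U W : cell_union U -> cell_union (reach U W).
Proof.
move=> hU; split => [x []//|A x y AK xA yA [Px [pi [pip pi0 piU pi1]]]].
have [N [oN Nx NA]] := star_cell x.
have [/cont_onP pic _] := pip.
have I0 : unit_I 0 by rewrite /unit_I /= lexx ler01.
have Npi0 : N (pi 0) by rewrite pi0.
have [Q [oQ Q0 QN]] := pic 0 I0 N oN Npi0.
have [s [s0 s1 Qs _]] := @open_nbhs_small R Q 0 (1/2) oQ Q0 (ltac:(lra)).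
rewrite add0r in Qs.
have sI : 0 < s < 1 by rewrite s0 /=; lra.
have Us : U (pi s) by apply: piU; exists s.
have Nps : N (pi s) by apply: QN Qs; rewrite /unit_I /=; apply/andP; split; lra.
have [r rK [sr yr]] := NA A y (pi s) AK xA yA Nps (hU.1 _ Us).
apply: reach_lerp rK yr (cell_union_relint hU rK sr Us) sr _.
exact: reach_shift.
Qed.

End CellUnions.

Section Semantics.
Variables (R : realType) (m : nat) (AP : finType).
Local Notation point := 'rV[R]_m.
Variables (K : {fset {fset point}}) (V : AP -> set point).
Hypothesis hM : polyhedral_model K V.
Local Notation P := (polyhedron K).
Local Notation sem := (sem K V).
Local Notation equiv := (log_equiv K V).
Implicit Types (A B : {fset point}) (x y z : point).

Lemma sem_cell_union phi : cell_union K (sem phi).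
Proof.
have hK := hM.1.
elim: phi => [|p|f IHf|f IHf g IHg|f IHf|f IHf g IHg] /=.
- exact: cell_union_polyhedron.
- have [S [SK ->]] := hM.2 p; split.
    by move=> x [B /SK[BK _] xB]; apply: relint_polyhedron xB.
  move=> A x y AK xA yA [B SB xB]; have [BK _] := SK B SB.
  by exists B => //; rewrite -(relint_inj hK AK BK xA xB).
- exact: cell_union_setD.
- exact: cell_union_setI.
- exact: cell_union_interior.
- exact: cell_union_reach.
Qed.

Lemma log_equiv_refl x : P x -> equiv x x.
Proof. by move=> Px; split=> //; split. Qed.

Lemma log_equiv_sym x y : equiv x y -> equiv y x.
Proof. by move=> [Px [Py xy]]; split=> //; split=> // phi; rewrite xy. Qed.

Lemma log_equiv_trans x y z : equiv x y -> equiv y z -> equiv x z.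
Proof. by move=> [Px [_ xy]] [_ [Pz yz]]; split=> //; split=> // phi; rewrite xy yz. Qed.

Lemma relint_log_equiv A x y : A \in K -> relint A x -> relint A y -> equiv x y.
Proof.
move=> AK xA yA; split; first exact: relint_polyhedron xA.
split; first exact: relint_polyhedron yA.
move=> phi; have [_ hU] := sem_cell_union phi.
by split; [exact: hU AK xA yA | exact: hU AK yA xA].
Qed.

Fixpoint FAnd_seq (psi : {fset point} -> formula AP) (s : seq {fset point}) :=
  if s is B :: s' then FAnd (psi B) (FAnd_seq psi s') else FTop AP.

Lemma sem_FAnd_seq psi s x :
  sem (FAnd_seq psi s) x <-> P x /\ forall B, B \in s -> sem (psi B) x.
Proof.
elim: s => [|B s IH] /=; first by split => // -[].
split => [[psiB /IH [Px psis]]|[Px psis]].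
  by split => // C; rewrite inE => /predU1P[->|/psis].
split; first by apply: psis; rewrite mem_head.
by apply/IH; split => // C Cs; apply/psis/mem_behead.
Qed.

Lemma separating_formula p B : P p -> exists psi : formula AP,
  sem psi p /\ forall z, B \in K -> relint B z -> ~ equiv p z -> ~ sem psi z.
Proof.
move=> Pp.
have [[z0 [BK Bz0 pz0]]|] := pselect (exists z, [/\ B \in K, relint B z & ~ equiv p z]);
  last by move=> noz; exists (FTop AP); split => // z BK Bz pz _; apply: noz; exists z.
have [phi phi_pz0] : exists phi, ~ (sem phi p <-> sem phi z0).
  apply: contrapT => same; apply: pz0; split=> //.
  split; first exact: relint_polyhedron Bz0.
  by move=> phi; apply: contrapT => differ; apply: same; exists phi.
have phiB z : relint B z -> sem phi z <-> sem phi z0.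
  by move=> Bz; have [_ [_]] := relint_log_equiv BK Bz Bz0; apply.
have [phip|nphip] := pselect (sem phi p).
  exists phi; split => // z _ Bz _ phiz; apply: phi_pz0; split => // _.
  exact/(phiB z Bz).
exists (FNeg phi); split => // z _ Bz _ [_ nphiz]; apply: phi_pz0; split => // phiz0.
by exfalso; apply/nphiz/(phiB z Bz).
Qed.

Lemma characteristic_formula p : P p -> exists chi : formula AP,
  forall q, P q -> (sem chi q <-> equiv p q).
Proof.
move=> Pp; have /choice [psi psiP] := (fun B => separating_formula B Pp).
exists (FAnd_seq psi K) => q Pq; split.
  move=> /sem_FAnd_seq [_ psiq]; apply: contrapT => npq.
  have [B BK Bq] := polyhedron_cell hM.1 Pq.
  exact: (psiP B).2 q BK Bq npq (psiq B BK).
move=> [_ [_ pq]]; apply/sem_FAnd_seq; split => // B BK.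
by apply/pq; have [] := psiP B.
Qed.

End Semantics.

Section SimplicialPaths.
Variables (R : realType) (m : nat).
Local Notation point := 'rV[R]_m.
Variable K : {fset {fset point}}.
Local Notation P := (polyhedron K).
Implicit Types (A : {fset point}) (p q : point) (f g : R -> point).

Definition cell_subdivision (a b : R) f := exists (k : nat) (s : nat -> R)
    (sigma : nat -> {fset point}),
  [/\ s 0%N = a, s k = b, (forall i, (i < k)%N -> s i < s i.+1) &
      (forall i, (1 <= i <= k)%N ->
         is_cell_of K (sigma i) /\ f @` [set t | s i.-1 < t < s i] `<=` relint (sigma i))].

Definition simplicial_on (a b : R) f :=
  [/\ cont_on (itv a b) f, (forall t, itv a b t -> P (f t)) & cell_subdivision a b f].

Lemma simplicial_on_path f : simplicial_on 0 1 f -> simplicial_path K f.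
Proof. by move=> [/cont_onP fc fP fs]. Qed.

Lemma increasing_le k (s : nat -> R) : (forall i, (i < k)%N -> s i < s i.+1) ->
  forall i j, (i <= j <= k)%N -> s i <= s j.
Proof.
move=> hs i; elim => [|j IH]; first by case: i.
move=> /andP[ij jk]; rewrite leq_eqVlt in ij; case/orP: ij => [/eqP -> //|ij].
apply: (le_trans (IH _)); first by rewrite -ltnS ij /= ltnW.
exact/ltW/hs.
Qed.

Lemma cell_subdivision_le a b f : cell_subdivision a b f -> a <= b.
Proof.
by move=> [k [s [_ [<- <- hs _]]]]; apply: (increasing_le hs); rewrite leq0n leqnn.
Qed.

Lemma cell_subdivision_glue a b c f g :
  cell_subdivision a b f -> cell_subdivision b c g ->
  cell_subdivision a c (fun t => if t <= b then f t else g t).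
Proof.
move=> [k1 [s1 [sg1 [s10 s1k s1i s1p]]]] [k2 [s2 [sg2 [s20 s2k s2i s2p]]]].
exists (k1 + k2)%N, (fun i => if (i <= k1)%N then s1 i else s2 (i - k1)%N),
  (fun i => if (i <= k1)%N then sg1 i else sg2 (i - k1)%N); split => /=.
- by [].
- have [k20|k2p] := posnP k2; first by rewrite k20 addn0 leqnn s1k -s2k k20 s20.
  by rewrite ifF ?addKn //; apply/negbTE; lia.
- move=> i ik; case: (ltngtP i k1) => [ik1|ik1|ik1]; first exact: s1i.
  + by rewrite subSn ?(ltnW ik1) //; apply: s2i; lia.
  + by subst i; rewrite s1k -s20 subSn // subnn; apply: s2i; lia.
move=> i /andP[i1 ik]; case: (leqP i k1) => ik1.
  have [cell img] := s1p i (introT andP (conj i1 ik1)).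
  have -> : (i.-1 <= k1)%N = true by lia.
  split => // _ [t /andP[t1 t2] <-].
  have tb : t <= b.
    by rewrite -s1k; apply: (le_trans (ltW t2)); apply: (increasing_le s1i); lia.
  by rewrite tb; apply: img; exists t => //; rewrite /= t1 t2.
have [cell img] : is_cell_of K (sg2 (i - k1)%N) /\
    g @` [set t | s2 (i - k1)%N.-1 < t < s2 (i - k1)%N] `<=` relint (sg2 (i - k1)%N).
  by apply: s2p; lia.
have -> : (if (i.-1 <= k1)%N then s1 i.-1 else s2 (i.-1 - k1)%N) = s2 (i - k1).-1.
  case: ifPn => h; last by congr s2; lia.
  have -> : i.-1 = k1 by lia.
  have -> : (i - k1)%N.-1 = 0%N by lia.
  by rewrite s1k s20.
split => // _ [t /andP[t1 t2] <-].
have bt : b < t.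
  by apply: le_lt_trans t1; rewrite -s20; apply: (increasing_le s2i); lia.
by rewrite leNgt bt /=; apply: img; exists t => //; rewrite /= t1 t2.
Qed.

Lemma simplicial_on_glue a b c f g : simplicial_on a b f -> simplicial_on b c g ->
  f b = g b -> simplicial_on a c (fun t => if t <= b then f t else g t).
Proof.
move=> [fc fP fs] [gc gP gs] fgb.
have ab := cell_subdivision_le fs; have bc := cell_subdivision_le gs.
split; [exact: cont_on_glue | | exact: cell_subdivision_glue].
move=> t /andP[ta tc] /=; case: ifPn => tb; first by apply: fP; rewrite /itv /= ta tb.
by apply: gP; rewrite /itv /= tc andbT ltW // ltNge.
Qed.

Lemma simplicial_on_cst a p : P p -> simplicial_on a a (fun _ => p).
Proof.
move=> Pp; split => //; first exact/continuous_cont_on/cst_continuous.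
exists 0%N, (fun _ => a), (fun _ => fset0); split => // i.
by case/andP => /leq_trans H /H.
Qed.

Definition cell_segment (U : set point) p q := exists2 A, A \in K &
  [/\ relint A `<=` U, conv A p, conv A q & forall l, 0 < l < 1 -> relint A (lerp p q l)].

Lemma affine_unit_I (a b t : R) : a < b -> a < t < b -> 0 < (t - a) / (b - a) < 1.
Proof.
move=> ab /andP[ta tb]; have ba : 0 < b - a by rewrite subr_gt0.
by apply/andP; split; [apply: divr_gt0; lra | rewrite ltr_pdivrMr // mul1r; lra].
Qed.

Lemma simplicial_on_cell_segment U p q a b : a < b -> cell_segment U p q ->
  simplicial_on a b (fun t => lerp p q ((t - a) / (b - a))).
Proof.
move=> ab [A AK [AU Ap Aq Apq]]; have ba : 0 < b - a by rewrite subr_gt0.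
split.
- apply/continuous_cont_on/lerp_continuous => t.
  by apply: cvgM; [apply: cvgB; [exact: cvg_id | exact: cvg_cst] | exact: cvg_cst].
- move=> t /andP[ta tb]; apply: (conv_polyhedron AK); apply: lerp_conv Ap Aq _.
  by apply/andP; split; [apply: divr_ge0; lra | rewrite ler_pdivrMr // mul1r; lra].
- exists 1%N, (fun i => if i == 0%N then a else b), (fun _ => A); split => //.
    by case => //= _; rewrite eqxx.
  case => // -[] // _; split.
    by split => //; apply: (@relint_neq0 _ _ _ (lerp p q (1/2))); apply: Apq; lra.
  by move=> _ [t /= abt <-]; apply/Apq/affine_unit_I.
Qed.

Inductive cell_chain (U : set point) : point -> point -> Prop :=
| cell_chain1 p q : cell_segment U p q -> cell_chain U p q
| cell_chainS p q r : cell_segment U p q -> U q -> cell_chain U q r -> cell_chain U p r.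

Lemma cell_chain_rcons U p q r : cell_chain U p q -> U q -> cell_segment U q r ->
  cell_chain U p r.
Proof.
elim => [{}p {}q pq|{}p q' {}q pq' Uq' _ IH] Uq qr.
  exact: cell_chainS pq Uq (cell_chain1 qr).
exact: cell_chainS pq' Uq' (IH Uq qr).
Qed.

Lemma cell_chain_simplicial_on U p q : cell_chain U p q -> forall a b, a < b ->
  exists f, [/\ simplicial_on a b f, f a = p, f b = q & forall t, a < t < b -> U (f t)].
Proof.
elim => [{}p {}q pq|{}p q' {}q pq' Uq' _ IH] a b ab.
  exists (fun t => lerp p q ((t - a) / (b - a))); split.
  - exact: simplicial_on_cell_segment pq.
  - by rewrite subrr mul0r lerp0.
  - by rewrite divff ?lerp1 // subr_eq0 gt_eqF.
  - by move=> t abt; case: pq => A _ [AU _ _ Apq]; apply/AU/Apq/affine_unit_I.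
pose c := (a + b) / 2; have ac : a < c by rewrite /c; lra.
have [f [fs fc fb fU]] := IH c b (ltac:(rewrite /c; lra)).
exists (fun t => if t <= c then lerp p q' ((t - a) / (c - a)) else f t); split.
- apply: simplicial_on_glue fs _; first exact: simplicial_on_cell_segment pq'.
  by rewrite divff ?lerp1 ?fc // subr_eq0 gt_eqF.
- by rewrite ltW // subrr mul0r lerp0.
- by rewrite ifF //; apply/negbTE; rewrite -ltNge /c; lra.
move=> t /andP[ta tb]; case: ltgtP => [tc|ct|->]; last 1 first.
- by rewrite divff ?lerp1 // subr_eq0 gt_eqF.
- by case: pq' => A _ [AU _ _ Apq]; apply/AU/Apq/affine_unit_I; rewrite ?ta.
- by apply: fU; rewrite ct tb.
Qed.

End SimplicialPaths.

Section PathsToChains.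
Variables (R : realType) (m : nat).
Local Notation point := 'rV[R]_m.
Variable K : {fset {fset point}}.
Hypothesis hK : simplicial_complex K.
Local Notation P := (polyhedron K).
Variables (U : set point) (pi : R -> point).
Hypotheses (hU : cell_union K U) (pic : cont_on (itv 0 1) pi)
  (piU : forall t, 0 < t < 1 -> U (pi t)).

(* Close to pi t, a point pi t' of U sits in a cell whose closure contains pi t,
   so the straight segment between them runs through that cell. *)
Lemma path_cell_segment_near t : itv 0 1 t -> exists Q : set R, [/\ open Q, Q t &
  forall t', 0 < t' < 1 -> Q t' ->
    cell_segment K U (pi t') (pi t) /\ cell_segment K U (pi t) (pi t')].
Proof.
move=> It; have [N [oN Nt NB]] := star_nbhd K (pi t).
have [Q [oQ Qt QN]] := pic It oN Nt.
exists Q; split => // t' t'I Qt'.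
have It' : itv 0 1 t' by case/andP: t'I => t0 t1; apply/andP; split; apply: ltW.
have Ut' := piU t'I.
have [r rK rt'] := polyhedron_cell hK (hU.1 _ Ut').
have rt : conv r (pi t) := NB r rK (pi t') (QN t' It' Qt') (relint_conv rt').
have rU := cell_union_relint hU rK rt' Ut'.
split; exists r => //; split => //; try exact: relint_conv.
  by move=> l /andP[l0 l1]; rewrite lerpC; apply: lerp_relint rt rt' _; lra.
by move=> l /andP[l0 l1]; apply: lerp_relint rt rt' _; lra.
Qed.

(* The set of t in (0, 1) such that pi t is reached from pi 0 by a chain is
   open and closed there. *)
Lemma path_cell_chain : cell_chain K U (pi 0) (pi 1).
Proof.
have I0 : itv 0 1 (0 : R) by rewrite /itv /= lexx ler01.
have I1 : itv 0 1 (1 : R) by rewrite /itv /= lexx ler01.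
have chain_open_unit_I : forall t, 0 < t < 1 -> cell_chain K U (pi 0) (pi t).
  apply: (@connected_locally_constant R [set t | 0 < t < 1]
    (fun t => cell_chain K U (pi 0) (pi t))).
  - apply/connected_intervalP => x y /andP[x0 _] /andP[_ y1] z /andP[xz zy].
    by rewrite /= (lt_le_trans x0 xz) (le_lt_trans zy y1).
  - move=> t tI; have [t0 t1] := andP tI.
    have [Q [oQ Qt QS]] := path_cell_segment_near (introT andP (conj (ltW t0) (ltW t1))).
    exists Q; split => // t' t'I Qt'; have [tt' t't] := QS t' t'I Qt'.
    by split => ch; [apply: cell_chain_rcons ch (piU tI) t't |
                     apply: cell_chain_rcons ch (piU t'I) tt'].
  - have [Q [oQ Q0 QS]] := path_cell_segment_near I0.
    have [e [e0 e1 Qe _]] := open_nbhs_small oQ Q0 (ltac:(lra) : 0 < 1/2 :> R).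
    rewrite add0r in Qe; have eI : 0 < e < 1 by rewrite e0 /=; lra.
    by exists e => //; apply: cell_chain1; case: (QS e eI Qe).
have [Q [oQ Q1 QS]] := path_cell_segment_near I1.
have [e [e0 e1 _ Qe]] := open_nbhs_small oQ Q1 (ltac:(lra) : 0 < 1/2 :> R).
have eI : 0 < 1 - e < 1 by apply/andP; split; lra.
have [seg _] := QS _ eI Qe.
exact: cell_chain_rcons (chain_open_unit_I _ eI) (piU eI) seg.
Qed.

End PathsToChains.

Section SimplicialReach.
Variables (R : realType) (m : nat).
Local Notation point := 'rV[R]_m.
Variable K : {fset {fset point}}.
Hypothesis hK : simplicial_complex K.

Lemma reach_simplicial_on U W x a b : cell_union K U -> reach K U W x -> a < b ->
  exists h, [/\ simplicial_on K a b h, h a = x,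
    forall t, a < t < b -> U (h t) & W (h b)].
Proof.
move=> hU [_ [pi [[/cont_onP pic _] pi0 piU pi1]]] ab.
have piU' t : 0 < t < 1 -> U (pi t) by move=> t01; apply: piU; exists t.
have [h [hs ha hb hU']] := cell_chain_simplicial_on (path_cell_chain hK hU pic piU') ab.
by exists h; split => //; [rewrite ha pi0 | rewrite hb].
Qed.

End SimplicialReach.

Section Lifting.
Variables (R : realType) (m : nat) (AP : finType).
Local Notation point := 'rV[R]_m.
Variables (K : {fset {fset point}}) (V : AP -> set point).
Hypothesis hM : polyhedral_model K V.
Local Notation P := (polyhedron K).
Local Notation sem := (sem K V).
Local Notation equiv := (log_equiv K V).
Implicit Types (x y : point).

(* The start of the segment satisfies gamma(chi_c, chi_b), where chi_c and chi_b
   characterise a point c of the open segment and its end b; so does y, and the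
   witnessing path from y can be made simplicial. *)
Lemma simplicial_segment_lift A a b px y : a < b -> A \in K ->
  cont_on (itv a b) px -> (forall t, itv a b t -> P (px t)) ->
  (forall t, a < t < b -> relint A (px t)) -> equiv (px a) y ->
  exists h, [/\ simplicial_on K a b h, h a = y &
    forall t, a < t <= b -> equiv (px t) (h t)].
Proof.
move=> ab AK pxc pxP pxA [_ [_ pxa_y]].
pose c := (a + b) / 2; have cI : a < c < b by rewrite /c; apply/andP; split; lra.
have Pc : P (px c) by apply: relint_polyhedron (pxA c cI).
have Pb : P (px b) by apply: pxP; rewrite /itv /= lexx ltW.
have [chi_c chi_cP] := characteristic_formula hM Pc.
have [chi_b chi_bP] := characteristic_formula hM Pb.
have c_equiv t : a < t < b -> equiv (px c) (px t).
  by move=> tI; apply: (relint_log_equiv hM AK (pxA c cI) (pxA t tI)).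
have /pxa_y gamma_y : sem (FGamma chi_c chi_b) (px a).
  apply: (reach_cont_on (f := px) (a := a) (b := b)) => // [t tI|].
    by apply/chi_cP; [apply: relint_polyhedron (pxA t tI) | apply: c_equiv].
  exact/chi_bP/log_equiv_refl.
have [h [hs ha hU hb]] := reach_simplicial_on hM.1 (sem_cell_union hM chi_c) gamma_y ab.
exists h; split => // t /andP[ta]; rewrite le_eqVlt => /predU1P[->|tb].
  by apply/chi_bP => //; apply: (sem_cell_union hM chi_b).1.
have tI : a < t < b by rewrite ta.
apply: log_equiv_trans (log_equiv_sym (c_equiv t tI)) _.
by apply/chi_cP; [apply: (sem_cell_union hM chi_c).1 | ]; apply: hU.
Qed.

Lemma simplicial_path_lift x y px : equiv x y -> simplicial_path K px -> px 0 = x ->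
  exists2 py, simplicial_path K py /\ py 0 = y & path_rel equiv px py.
Proof.
move=> xy [[/cont_onP pxc pxP] [k [s [sg [s0 sk si sp]]]]] px0.
have s_ge0 i : (i <= k)%N -> 0 <= s i by rewrite -s0 => ik; apply: (increasing_le si).
have s_le1 i : (i <= k)%N -> s i <= 1.
  by rewrite -sk => ik; apply: (increasing_le si); rewrite ik leqnn.
suff /(_ k (leqnn k)) : forall j, (j <= k)%N -> exists g, [/\ simplicial_on K 0 (s j) g,
    g 0 = y & forall t, itv 0 (s j) t -> equiv (px t) (g t)].
  rewrite sk => -[g [gs g0 gpx]].
  by exists g => //; split => //; apply: simplicial_on_path.
elim => [_|j IH jk].
  exists (fun _ => y); split => //.
    by rewrite s0; apply: simplicial_on_cst; case: xy => _ [].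
  move=> t; rewrite s0 => /andP[t0 t1]; have -> : t = 0 by apply/eqP; rewrite eq_le t1 t0.
  by rewrite px0.
have [g [gs g0 gpx]] := IH (ltnW jk).
have [[sgK _] sgpx] := sp j.+1 jk.
have [sj0 sj1] := (s_ge0 j (ltnW jk), s_le1 _ jk).
have seg01 : itv (s j) (s j.+1) `<=` itv 0 1.
  by move=> t /andP[t0 t1]; rewrite /itv /= (le_trans sj0 t0) (le_trans t1 sj1).
have [h [hs ha hpx]] := simplicial_segment_lift (si j jk) sgK (cont_on_sub seg01 pxc)
  (fun t tI => pxP t (seg01 t tI)) (fun t tI => sgpx _ (imageP px tI))
  (gpx (s j) (introT andP (conj sj0 (lexx _)))).
exists (fun t => if t <= s j then g t else h t); split.
- by apply: simplicial_on_glue gs hs _; rewrite ha.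
- by rewrite ifT ?s_ge0 // ltnW.
move=> t /andP[t0 tb]; case: ifPn => ta; first by apply: gpx; rewrite /itv /= t0 ta.
by apply: hpx; rewrite -ltNge in ta; rewrite ta tb.
Qed.

End Lifting.

Theorem mainTheorem13 (R : realType) (m : nat) (AP : finType)
    (K : {fset {fset 'rV[R]_m}}) (V : AP -> set 'rV[R]_m) :
  polyhedral_model K V ->
  simplicial_bisimulation K V (log_equiv K V).
Proof.
move=> hM; split => [x y [Px [Py _]] // | x y xy]; split.
- by move=> p; have [_ [_ xy_sem]] := xy; apply: (xy_sem (FAtom p)).
- by move=> px; apply: (simplicial_path_lift hM xy).
- move=> py pys py0.
  have [px [pxs px0] pxpy] := simplicial_path_lift hM (log_equiv_sym xy) pys py0.
  by exists px => // t tI; apply/log_equiv_sym/pxpy.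
Qed.
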